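(* Let $0< c\le 3$ and let $F$ be the distribution on $\{0,1\}$ with $\mathbb{P}(1)=c/3$. Then $BRev(F^3)/SRev(F^3) > 0.6$.
   Context: For i.i.d. values $X_1,\dots,X_k\sim F$ of an additive buyer: $SRev(F^k) = k\cdot\sup_{p\ge0} p\,\mathbb{P}(X_1\ge p)$ is the maximal revenue from selling each item separately at posted prices, and $BRev(F^k) = \sup_{p\ge 0} p\,\mathbb{P}(X_1+\dots+X_k\ge p)$ is the maximal revenue from selling all items as one bundle at a posted price. Here $k=3$. *)

From HB Require Import structures.
From mathcomp Require Import all_boot all_order all_algebra.
From mathcomp Require Import boolp classical_sets reals.
Set Implicit Arguments. Unset Strict Implicit. Unset Printing Implicit Defensive.
Import Order.TTheory GRing.Theory Num.Theory.
Local Open Scope ring_scope.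
Local Open Scope classical_set_scope.

Section Bernoulli.
Variable R : realType.

(* pmf of the distribution F on {0,1} (value [true] = 1) with P(1) = a *)
Definition bern_pmf (a : R) (b : bool) : R := if b then a else 1 - a.

Definition prodw (a : R) (k : nat) (x : {ffun 'I_k -> bool}) : R :=
  \prod_(i < k) bern_pmf a (x i).

Definition Pr (a : R) (k : nat) (E : pred {ffun 'I_k -> bool}) : R :=
  \sum_(x | E x) prodw a x.

Definition Xv (k : nat) (x : {ffun 'I_k -> bool}) (i : 'I_k) : R := (x i)%:R.

Definition SRev (a : R) (k : nat) (i0 : 'I_k) : R :=
  k%:R * sup ((fun p : R => p * Pr a (fun x => p <= Xv x i0)) @` [set p | 0 <= p]).

Definition BRev (a : R) (k : nat) : R :=
  sup ((fun p : R => p * Pr a (k := k) (fun x => p <= \sum_(i < k) Xv x i))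
         @` [set p | 0 <= p]).

End Bernoulli.

(* With a = c/3 a single item is worth 1 with probability a, so its best posted
   price is 1 and SRev = 3a.  Pricing the bundle at 1 earns 1 - (1-a)^3 and at 2
   earns 2(3a^2 - 2a^3); the first exceeds (3/5)(3a) when a <= 9/20, the second
   when 9/20 <= a <= 1. *)

From HB Require Import structures.
From mathcomp Require Import all_boot all_order all_algebra.
From mathcomp Require Import boolp classical_sets reals.
From mathcomp Require Import ring lra.
Set Implicit Arguments. Unset Strict Implicit. Unset Printing Implicit Defensive.
Import Order.TTheory GRing.Theory Num.Theory.
Local Open Scope ring_scope.

Lemma sup_eq_attained (R : realType) (E : set R) (x : R) :
  E x -> ubound E x -> sup E = x.
Proof.
move=> Ex ubx; have E_ub : has_ubound E by exists x.
by apply/eqP; rewrite eq_le ge_sup ?ub_le_sup //; exists x.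
Qed.

Section ProductBernoulli.
Variables (R : realType) (a : R) (k : nat).
Hypothesis a01 : 0 <= a <= 1.

Lemma bern_pmf_ge0 b : 0 <= bern_pmf a b.
Proof. by case: b; case/andP: a01 => ? ? /=; lra. Qed.

Lemma bern_pmf_sum : \sum_b bern_pmf a b = 1.
Proof. by rewrite big_bool /= addrC subrK. Qed.

Lemma prodw_ge0 (x : {ffun 'I_k -> bool}) : 0 <= prodw a x.
Proof. by apply: prodr_ge0 => i _; exact: bern_pmf_ge0. Qed.

Lemma Pr_ge0 (E : pred {ffun 'I_k -> bool}) : 0 <= Pr a E.
Proof. by apply: sumr_ge0 => x _; exact: prodw_ge0. Qed.

Lemma Pr_subset (E F : pred {ffun 'I_k -> bool}) :
  (forall x, E x -> F x) -> Pr a E <= Pr a F.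
Proof.
move=> EF; rewrite /Pr [leLHS]big_mkcond [leRHS]big_mkcond /=.
apply: ler_sum => x _; case: (boolP (E x)) => [/EF -> //|_].
by case: (F x) => //; exact: prodw_ge0.
Qed.

Lemma Pr_pred0 (E : pred {ffun 'I_k -> bool}) : E =1 xpred0 -> Pr a E = 0.
Proof. by move=> E0; rewrite /Pr big_pred0. Qed.

Lemma Pr_product (A : 'I_k -> pred bool) :
  Pr a (fun x => [forall i, A i (x i)]) = \prod_i \sum_(b | A i b) bern_pmf a b.
Proof.
by rewrite bigA_distr_big_dep; apply: eq_bigl => x; apply/forallP/familyP.
Qed.

Lemma Pr_predT : Pr a (k := k) xpredT = 1.
Proof.
rewrite /Pr /prodw -(bigA_distr_bigA (fun=> bern_pmf a)) big1 // => i _.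
exact: bern_pmf_sum.
Qed.

Lemma Pr_le1 (E : pred {ffun 'I_k -> bool}) : Pr a E <= 1.
Proof. by rewrite -Pr_predT; apply: Pr_subset. Qed.

Lemma Pr_coord (i : 'I_k) : Pr a (fun x => x i) = a.
Proof.
have -> : Pr a (fun x => x i) = Pr a (fun x => [forall j, (j != i) || x j]).
  apply: eq_bigl => x; apply/idP/forallP => [xi j | /(_ i)]; last by rewrite eqxx.
  by case: eqP => [->|].
rewrite (Pr_product (fun j b => (j != i) || b)) (bigD1 i) //= eqxx.
rewrite big_mkcond big_bool /= addr0 big1 ?mulr1 // => j ji.
by rewrite ji; exact: bern_pmf_sum.
Qed.

Lemma Pr_ge_gt_bound {X : {ffun 'I_k -> bool} -> R} {M p : R} :
  (forall x, X x <= M) -> M < p -> Pr a (fun x => p <= X x) = 0.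
Proof.
move=> XM Mp; apply: Pr_pred0 => x /=; apply/negbTE.
by rewrite -ltNge (le_lt_trans (XM x) Mp).
Qed.

Lemma Xv_le1 (x : {ffun 'I_k -> bool}) i : Xv R x i <= 1.
Proof. by rewrite /Xv; case: (x i). Qed.

Lemma sum_Xv_le (x : {ffun 'I_k -> bool}) : \sum_(i < k) Xv R x i <= k%:R.
Proof.
apply: le_trans (ler_sum _ (fun i _ => Xv_le1 x i)) _.
by rewrite sumr_const card_ord.
Qed.

Lemma SRev_bernoulli (i0 : 'I_k) : SRev a i0 = k%:R * a.
Proof.
have [a_ge0 _] := andP a01.
rewrite /SRev; congr (_ * _); apply: sup_eq_attained.
  exists 1; rewrite /= ?ler01 // mul1r -[RHS](Pr_coord i0).
  by apply: eq_bigl => x; rewrite /Xv; case: (x i0); rewrite /= ?lexx ?ler10.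
move=> _ [p /= p_ge0 <-].
have [p_gt1|p_le1] := ltrP 1 p.
  by rewrite (Pr_ge_gt_bound (fun x => Xv_le1 x i0) p_gt1) mulr0.
rewrite le_eqVlt in p_ge0; case/predU1P: p_ge0 => [<-|p_gt0]; first by rewrite mul0r.
apply: le_trans (ler_piMl (Pr_ge0 _) p_le1) _.
rewrite -[leRHS](Pr_coord i0); apply: Pr_subset => x.
by rewrite /Xv; case: (x i0) => //=; rewrite leNgt p_gt0.
Qed.

Lemma BRev_ge (p : R) :
  0 <= p -> p * Pr a (fun x => p <= \sum_(i < k) Xv R x i) <= BRev a k.
Proof.
move=> p_ge0; apply: ub_le_sup; last by exists p.
exists k%:R => _ [q /= q_ge0 <-].
have [q_gtk|q_lek] := ltrP k%:R q.
  by rewrite (Pr_ge_gt_bound sum_Xv_le q_gtk) mulr0.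
by rewrite -[leRHS]mulr1 ler_pM ?Pr_ge0 ?Pr_le1.
Qed.

End ProductBernoulli.

Section ThreeItems.
Variables (R : realType) (a : R).

Definition bits3 (b0 b1 b2 : bool) : {ffun 'I_3 -> bool} :=
  [ffun i : 'I_3 => nth false [:: b0; b1; b2] i].

Lemma prodw_bits3 b0 b1 b2 :
  prodw a (bits3 b0 b1 b2) = bern_pmf a b0 * bern_pmf a b1 * bern_pmf a b2.
Proof. by rewrite /prodw !big_ord_recr big_ord0 /= !ffunE /= mul1r. Qed.

Lemma sum_Xv_bits3 b0 b1 b2 :
  \sum_(i < 3) Xv R (bits3 b0 b1 b2) i = (b0 + b1 + b2)%:R.
Proof. by rewrite !big_ord_recr big_ord0 /Xv /= !ffunE /= add0r !natrD. Qed.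

Lemma Pr3 (E : pred {ffun 'I_3 -> bool}) : Pr a E =
  \sum_(b0 : bool) \sum_(b1 : bool) \sum_(b2 : bool)
     (if E (bits3 b0 b1 b2) then bern_pmf a b0 * bern_pmf a b1 * bern_pmf a b2 else 0).
Proof.
rewrite /Pr big_mkcond (reindex (fun t => bits3 t.1.1 t.1.2 t.2)) /=; last first.
  exists (fun x : {ffun 'I_3 -> bool} => (x ord0, x (inord 1), x (inord 2))).
    by case=> [[b0 b1] b2] _; rewrite !ffunE !inordK.
  move=> x _; apply/ffunP => i; rewrite ffunE.
  by case: i => [[|[|[|//]]]] i_lt3 /=; congr (x _); apply/val_inj; rewrite /= ?inordK.
rewrite [RHS]pair_bigA [RHS]pair_bigA; apply: eq_bigr => -[[b0 b1] b2] _ /=.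
by rewrite prodw_bits3.
Qed.

Lemma Pr3_sum_ge (n : nat) : Pr a (fun x => n%:R <= \sum_(i < 3) Xv R x i) =
  \sum_(b0 : bool) \sum_(b1 : bool) \sum_(b2 : bool)
     (if (n <= b0 + b1 + b2)%N then bern_pmf a b0 * bern_pmf a b1 * bern_pmf a b2 else 0).
Proof.
rewrite Pr3; apply: eq_bigr => b0 _; apply: eq_bigr => b1 _; apply: eq_bigr => b2 _.
by rewrite sum_Xv_bits3 ler_nat.
Qed.

Lemma Pr3_sum_ge1 : Pr a (fun x => 1 <= \sum_(i < 3) Xv R x i) = 1 - (1 - a) ^+ 3.
Proof. by rewrite (Pr3_sum_ge 1) !big_bool /=; ring. Qed.

Lemma Pr3_sum_ge2 : Pr a (fun x => 2 <= \sum_(i < 3) Xv R x i) = 3 * a ^+ 2 - 2 * a ^+ 3.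
Proof. by rewrite (Pr3_sum_ge 2) !big_bool /=; ring. Qed.

End ThreeItems.

Lemma bundle_prices_beat_three_fifths (R : realType) (a : R) : 0 < a -> a <= 1 ->
  3 / 5 * (3 * a) < 1 - (1 - a) ^+ 3 \/ 3 / 5 * (3 * a) < 2 * (3 * a ^+ 2 - 2 * a ^+ 3).
Proof.
move=> a_gt0 a_le1; have [a_small|a_large] := lerP a (9 / 20).
  by left; nra.
have sign_hint : 0 <= a * ((a - 9 / 20) * (1 - a)).
  by rewrite !mulr_ge0 ?subr_ge0 // ltW.
by right; nra.
Qed.

Theorem lemma3 (R : realType) (c : R) :
  0 < c -> c <= 3 ->
  BRev (c / 3) 3 / SRev (c / 3) (ord0 : 'I_3) > 3 / 5.
Proof.
move=> c_gt0 c_le3; set a := c / 3.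
have a_gt0 : 0 < a by rewrite divr_gt0.
have a_le1 : a <= 1 by rewrite ler_pdivrMr // mul1r.
have a01 : 0 <= a <= 1 by rewrite ltW.
rewrite SRev_bernoulli // ltr_pdivlMr; last exact: mulr_gt0.
have price1 := BRev_ge 3 a01 ler01.
have price2 := BRev_ge 3 a01 (ler0n R 2).
rewrite Pr3_sum_ge1 mul1r in price1; rewrite Pr3_sum_ge2 in price2.
case: (bundle_prices_beat_three_fifths a_gt0 a_le1) => [beat|beat].
- exact: lt_le_trans beat price1.
- exact: lt_le_trans beat price2.
Qed.
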